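(* Let $(B,\tau)$ be a topological space. Let $G(B,\tau)=(R,A,B,p,\partial)$ be the fibrous preorder with $$A=\{(U,x)\mid x\in U\in\tau\},\qquad p(U,x)=x,\qquad (U,x)Ry\iff y\in U,\qquad \partial((U,x),y)=(U,y).$$ Then $(B,\tau)$ is an Alexandrov space (i.e. every intersection of open sets is open) if and only if $G(B,\tau)$ is equivalent to a fibrous preorder of the form $(\le,B,B,1_B,\partial_\le)$ for some preorder $\le$ on $B$. Here $x\mathrel{R}y\iff x\le y$ and $\partial_\le(x,y)=y$.
   Context: A fibrous preorder is a sequence $R\xrightarrow{\partial}A\xrightarrow{p}B$ consisting of the following data: - sets $A$ and $B$; - a map $p\colon A\to B$; - a relation $R\subseteq A\times B$ (write $aRb$ for $(a,b)\in R$); - a map $\partial\colon R\to A$. These must satisfy, for all $a\in A$ and $b,y\in B$ with $aRb$: - (F1) $p\partial(a,b)=b$; - (F2) $aRp(a)$ (this holds for all $a\in A$); - (F3) $\partial(a,b)Ry\Rightarrow aRy$. Two fibrous preorders $(R,A,B,p,\partial)$ and $(R',A',B',p',\partial')$ are equivalent if $B=B'$ and there exist maps $\varphi\colon A\to A'$ and $\gamma\colon A'\to A$ with $p'\varphi=p$ and $p\gamma=p'$ such that, for all $a\in A$, $a'\in A'$ and $b\in B$, $\varphi(a)R'b\Rightarrow aRb$ and $\gamma(a')Rb\Rightarrow a'R'b$. *)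

(** A fibrous preorder  R --∂--> A --p--> B  over a fixed base set B.
    The relation R ⊆ A × B is a predicate; ∂ is defined on R, i.e. it takes a
    proof of aRb. *)
Record fibrous_preorder (B : Type) := FibrousPreorder {
  fp_A : Type;
  fp_p : fp_A -> B;
  fp_R : fp_A -> B -> Prop;
  fp_d : forall (a : fp_A) (b : B), fp_R a b -> fp_A;
  fp_F1 : forall a b (h : fp_R a b), fp_p (fp_d a b h) = b;
  fp_F2 : forall a, fp_R a (fp_p a);
  fp_F3 : forall a b y (h : fp_R a b), fp_R (fp_d a b h) y -> fp_R a y
}.

Arguments fp_A {B}.
Arguments fp_p {B}.
Arguments fp_R {B}.
Arguments fp_d {B}.

Definition fp_equiv {B : Type} (X Y : fibrous_preorder B) : Prop :=
  exists (phi : fp_A X -> fp_A Y) (gam : fp_A Y -> fp_A X),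
    (forall a, fp_p Y (phi a) = fp_p X a) /\
    (forall a', fp_p X (gam a') = fp_p Y a') /\
    (forall a b, fp_R Y (phi a) b -> fp_R X a b) /\
    (forall a' b, fp_R X (gam a') b -> fp_R Y a' b).

Record topology (B : Type) := Topology {
  is_open : (B -> Prop) -> Prop;
  open_full : is_open (fun _ => True);
  open_union : forall F : (B -> Prop) -> Prop,
      (forall U, F U -> is_open U) -> is_open (fun x => exists U, F U /\ U x);
  open_inter : forall U V, is_open U -> is_open V -> is_open (fun x => U x /\ V x)
}.

Arguments is_open {B}.

Definition alexandrov {B : Type} (tau : topology B) : Prop :=
  forall F : (B -> Prop) -> Prop,
    (forall U, F U -> is_open tau U) -> is_open tau (fun x => forall U, F U -> U x).

Definition G_A {B : Type} (tau : topology B) : Type :=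
  { Ux : (B -> Prop) * B | is_open tau (fst Ux) /\ fst Ux (snd Ux) }.

Definition G_p {B : Type} (tau : topology B) (a : G_A tau) : B := snd (proj1_sig a).

Definition G_R {B : Type} (tau : topology B) (a : G_A tau) (y : B) : Prop :=
  fst (proj1_sig a) y.

Definition G_d {B : Type} (tau : topology B) (a : G_A tau) (y : B)
  (h : G_R tau a y) : G_A tau :=
  exist _ (fst (proj1_sig a), y) (conj (proj1 (proj2_sig a)) h).

Lemma G_F1 {B : Type} (tau : topology B) a b (h : G_R tau a b) :
  G_p tau (G_d tau a b h) = b.
Proof. reflexivity. Qed.

Lemma G_F2 {B : Type} (tau : topology B) a : G_R tau a (G_p tau a).
Proof. exact (proj2 (proj2_sig a)). Qed.

Lemma G_F3 {B : Type} (tau : topology B) a b y (h : G_R tau a b) :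
  G_R tau (G_d tau a b h) y -> G_R tau a y.
Proof. intro H; exact H. Qed.

Definition G_fp {B : Type} (tau : topology B) : fibrous_preorder B :=
  FibrousPreorder B (G_A tau) (G_p tau) (G_R tau) (G_d tau)
    (G_F1 tau) (G_F2 tau) (G_F3 tau).

Definition preorder_fp {B : Type} (le : B -> B -> Prop)
  (hrefl : forall x, le x x)
  (htrans : forall x y z, le x y -> le y z -> le x z) : fibrous_preorder B.
Proof.
  refine (FibrousPreorder B B (fun x => x) le (fun x y _ => y) _ _ _).
  - intros; reflexivity.
  - exact hrefl.
  - intros a b y h H; exact (htrans a b y h H).
Defined.

(** A topological space is Alexandrov exactly when every point [x] has a
    smallest open neighbourhood.  Both directions of the theorem go through
    this characterisation:

    - If [tau] is Alexandrov, the intersection [N x] of all open sets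
      containing [x] is the smallest open neighbourhood of [x].  Taking for
      [<=] the specialization preorder ([x <= y] iff every open set containing
      [x] contains [y]), the maps [(U, x) |-> x] and [x |-> (N x, x)] form an
      equivalence between [G(B, tau)] and [(<=, B, B, 1_B, ∂_<=)].

    - Conversely, given such an equivalence [(phi, gam)], the open set
      underlying [gam x] contains [x], lies inside the up-set of [x], and the
      up-set of [x] lies in every open set containing [x] (via [phi]); so it
      is a smallest open neighbourhood of [x].  Any intersection of open sets
      is then the union of the smallest neighbourhoods of its points. *)

From Stdlib Require Import FunctionalExtensionality PropExtensionality.

Section Neighbourhoods.

Variable B : Type.
Variable tau : topology B.

Definition minimal_nbhd (x : B) (V : B -> Prop) : Prop :=
  is_open tau V /\ V x /\
  forall U, is_open tau U -> U x -> forall y, V y -> U y.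

Definition specialization (x y : B) : Prop :=
  forall U, is_open tau U -> U x -> U y.

Lemma specialization_refl (x : B) : specialization x x.
Proof. intros U _ Hx; exact Hx. Qed.

Lemma specialization_trans (x y z : B) :
  specialization x y -> specialization y z -> specialization x z.
Proof. intros Hxy Hyz U HU Hx; exact (Hyz U HU (Hxy U HU Hx)). Qed.

Lemma open_ext (U V : B -> Prop) :
  is_open tau U -> (forall y, U y <-> V y) -> is_open tau V.
Proof.
  intros HU HUV.
  replace V with U; [exact HU |].
  apply functional_extensionality; intro y.
  apply propositional_extensionality; apply HUV.
Qed.

Lemma alexandrov_minimal_nbhd (Hal : alexandrov tau) (x : B) :
  minimal_nbhd x (fun y => forall U, is_open tau U /\ U x -> U y).
Proof.
  split; [| split].
  - apply Hal; intros U [HU _]; exact HU.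
  - intros U [_ Hx]; exact Hx.
  - intros U HU Hx y Hy; exact (Hy U (conj HU Hx)).
Qed.

(** If every point has a smallest open neighbourhood, the space is
    Alexandrov: an intersection of open sets is the union of the smallest
    neighbourhoods of its points. *)
Lemma minimal_nbhds_alexandrov :
  (forall x, exists V, minimal_nbhd x V) -> alexandrov tau.
Proof.
  intros Hmin F HF.
  set (I := fun y => forall U, F U -> U y).
  set (cover := fun W => exists x, I x /\ minimal_nbhd x W).
  apply (open_ext (fun y => exists W, cover W /\ W y)).
  - apply open_union; intros W [x [_ [HW _]]]; exact HW.
  - intro y; split.
    + intros [W [[x [Hx [_ [_ HWmin]]]] Hy]] U HFU.
      exact (HWmin U (HF U HFU) (Hx U HFU) y Hy).
    + intro Hy; destruct (Hmin y) as [W HW].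
      exists W; split; [exists y; split; assumption | exact (proj1 (proj2 HW))].
Qed.

Lemma minimal_nbhds_equiv (N : B -> B -> Prop) :
  (forall x, minimal_nbhd x (N x)) ->
  fp_equiv (G_fp tau)
    (preorder_fp specialization specialization_refl specialization_trans).
Proof.
  intro HN.
  exists (fun a : G_A tau => G_p tau a).
  exists (fun x => exist _ (N x, x) (conj (proj1 (HN x)) (proj1 (proj2 (HN x))))).
  split; [| split; [| split]].
  - reflexivity.
  - reflexivity.
  - intros [[U x] [HU Hx]] y Hxy; exact (Hxy U HU Hx).
  - intros x y Hy U HU Hx; exact (proj2 (proj2 (HN x)) U HU Hx y Hy).
Qed.

Lemma equiv_minimal_nbhd (le : B -> B -> Prop)
  (hrefl : forall x, le x x)
  (htrans : forall x y z, le x y -> le y z -> le x z) :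
  fp_equiv (G_fp tau) (preorder_fp le hrefl htrans) ->
  forall x, exists V, minimal_nbhd x V.
Proof.
  intros [phi [gam [Hphi [Hgam [Hphi_R Hgam_R]]]]] x.
  exists (fst (proj1_sig (gam x))).
  split; [| split].
  - exact (proj1 (proj2_sig (gam x))).
  - (* [gam x] lies over [x], and every [(U, z)] satisfies [z ∈ U] *)
    assert (Hover : G_p tau (gam x) = x) by exact (Hgam x).
    pose proof (G_F2 tau (gam x)) as Hx; rewrite Hover in Hx; exact Hx.
  - intros U HU HUx y Hy.
    (* [y ∈ V] gives [x <= y]; at the point [(U, x)] this yields [y ∈ U]. *)
    assert (Hxy : le x y) by exact (Hgam_R x y Hy).
    set (a := exist _ (U, x) (conj HU HUx) : G_A tau).
    assert (Hover : phi a = x) by exact (Hphi a).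
    apply (Hphi_R a y); simpl; rewrite Hover; exact Hxy.
Qed.

End Neighbourhoods.

Theorem mainTheorem6 (B : Type) (tau : topology B) :
  alexandrov tau <->
  exists (le : B -> B -> Prop)
         (hrefl : forall x, le x x)
         (htrans : forall x y z, le x y -> le y z -> le x z),
    fp_equiv (G_fp tau) (preorder_fp le hrefl htrans).
Proof.
  split.
  - intro Hal.
    exists (specialization B tau), (specialization_refl B tau),
      (specialization_trans B tau).
    exact (minimal_nbhds_equiv B tau _ (alexandrov_minimal_nbhd B tau Hal)).
  - intros [le [hrefl [htrans Hequiv]]].
    exact (minimal_nbhds_alexandrov B tau
             (equiv_minimal_nbhd B tau le hrefl htrans Hequiv)).
Qed.
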